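(* Let $q$ be a prime power and let $n\ge 1$, $k\ge1$ and $0\le x\le k$ be integers. Let $\mathbf{M}$ be a random $n\times k$ matrix over $\mathbb{F}_q$ whose entries are independent and uniformly distributed on $\mathbb{F}_q$ (the coding vectors of $n$ received non-systematic random linear combinations of $k$ source packets), and let $X=\{i\in\{1,\dots,k\}:\mathbf{e}_i\in\mathrm{Row}(\mathbf{M})\}$ (the set of recoverable source packets). Then $$P_{\mathrm{ns}}(|X|\ge x\mid N=n)=\frac{1}{q^{nk}}\sum_{r=x}^{\min(n,k)}\left(\sum_{i=x}^{r}\binom{k}{i}\sum_{j=0}^{k-i}(-1)^j\binom{k-i}{j}\binom{k-i-j}{r-i-j}_q\right)\prod_{\ell=0}^{r-1}(q^n-q^\ell),$$ where an empty sum equals $0$ and an empty product equals $1$.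
   Context: $\mathbf{e}_i$ denotes the $i$-th standard unit vector of $\mathbb{F}_q^k$, and $\mathrm{Row}(\mathbf{M})$ is the row space of $\mathbf{M}$. $N$ denotes the number of rows of $\mathbf{M}$. $\binom{m}{d}$ is the ordinary binomial coefficient. $\binom{m}{d}_q$ is the Gaussian binomial coefficient, i.e. the number of $d$-dimensional subspaces of an $m$-dimensional vector space over $\mathbb{F}_q$, $\binom{m}{d}_q=\prod_{i=0}^{d-1}\frac{q^{m}-q^{i}}{q^{d}-q^{i}}$ for $0\le d\le m$. By convention $\binom{m}{d}_q=0$ if $d<0$ or $d>m$. *)

From HB Require Import structures.
From mathcomp Require Import all_boot all_order all_algebra.
Set Implicit Arguments. Unset Strict Implicit. Unset Printing Implicit Defensive.
Import Order.TTheory GRing.Theory Num.Theory.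

Local Open Scope ring_scope.

Definition gbinom (q : nat) (m d : int) : rat :=
  if (0 <= d) && (d <= m) then
    \prod_(i < `|d|%N) (((q ^ `|m|)%:R - (q ^ i)%:R) / ((q ^ `|d|)%:R - (q ^ i)%:R))
  else 0.

Definition recoverable (F : fieldType) (n k : nat) (M : 'M[F]_(n, k)) : {set 'I_k} :=
  [set i : 'I_k | (delta_mx (0 : 'I_1) i <= M)%MS].

From HB Require Import structures.
From mathcomp Require Import all_boot all_order all_algebra.
From mathcomp Require Import zify ring.
Import Order.TTheory GRing.Theory Num.Theory.
Local Open Scope ring_scope.
Set Implicit Arguments. Unset Strict Implicit. Unset Printing Implicit Defensive.

(* The indices of a set S are all recoverable from M exactly when the
   coordinate space E_S spanned by the e_i, i in S, lies in the row space of M.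
   Grouping the matrices M by their row space U, each U of rank r is the row
   space of prod_(l < r) (q^n - q^l) matrices, and the spaces U containing E_S
   of rank r correspond to the subspaces of rank r - |S| of the complementary
   coordinate space, counted by a Gaussian binomial. So the number of M with
   S included in X(M) depends only on |S|, and inclusion-exclusion over S turns
   these numbers into the number of M with |X(M)| >= x. *)

Section CardSums.

Variables (R : nzRingType) (T : finType).

Lemma natr_card_set (P : pred T) :
  (#|[set x | P x]|)%:R = \sum_(x : T) (P x)%:R :> R.
Proof.
rewrite -sum1_card natr_sum big_mkcond /=; apply: eq_bigr => x _.
by rewrite inE; case: (P x).
Qed.

Lemma sum_partition_nat (P : pred T) (h : T -> nat) (N : nat) (f : nat -> R) :
  (forall x, P x -> h x < N)%N ->
  \sum_(x | P x) f (h x) = \sum_(j < N) #|[set x | P x && (h x == j)]|%:R * f j.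
Proof.
move=> ltN; have fE x : P x -> f (h x) = \sum_(j < N) (h x == j)%:R * f j.
  move=> Px; rewrite (bigD1 (Ordinal (ltN x Px))) //= eqxx mul1r big1 ?addr0 // => j.
  by rewrite -val_eqE /= eq_sym => /negbTE ->; rewrite mul0r.
under eq_bigr => x Px do rewrite (fE x Px).
rewrite exchange_big /=; apply: eq_bigr => j _.
rewrite natr_card_set mulr_suml big_mkcond /=; apply: eq_bigr => x _.
by case: (P x); rewrite ?mul0r ?mul1r.
Qed.

Lemma sum_nat_indicator (f : nat -> R) (a b N : nat) : (b <= N)%N ->
  \sum_(a <= i < b) f i = \sum_(i < N) ((a <= i) && (i < b))%N%:R * f i.
Proof.
move=> leN; rewrite (big_nat_widen a b N) // big_geq_mkord big_mkcond /=.
by apply: eq_bigr => i _; rewrite andbC; case: (_ && _); rewrite ?mul1r ?mul0r.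
Qed.

End CardSums.

Section SubsetSums.

Variables (R : nzRingType) (T : finType).

Lemma sum_subset_card (B : {set T}) (f : nat -> R) :
  \sum_(D : {set T} | D \subset B) f #|D| =
  \sum_(j < #|B|.+1) 'C(#|B|, j)%:R * f j.
Proof.
rewrite (@sum_partition_nat _ _ (fun D : {set T} => D \subset B) (fun D => #|D|) #|B|.+1 f).
  by under eq_bigr => j _ do rewrite cards_draws.
by move=> D /subset_leq_card.
Qed.

Lemma sum_subset_interval_card (A Y : {set T}) (f : nat -> R) : A \subset Y ->
  \sum_(S : {set T} | (A \subset S) && (S \subset Y)) f #|S| =
  \sum_(j < #|Y :\: A|.+1) 'C(#|Y :\: A|, j)%:R * f (#|A| + j)%N.
Proof.
move=> sAY; rewrite -(sum_subset_card _ (fun j => f (#|A| + j)%N)).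
rewrite (reindex_onto (fun D => A :|: D) (fun S => S :\: A)) /=; last first.
  by move=> S /andP[sAS _]; rewrite setDE setUIr setUCr setIT; apply/setUidPr.
have UDA D : (A :|: D) :\: A = D :\: A by rewrite setDUl setDv set0U.
apply: eq_big => D; rewrite UDA subsetUl subUset sAY /=.
  by rewrite subsetD (sameP eqP setDidPl).
move=> /andP[_ /eqP/setDidPl dDA].
by rewrite cardsU disjoint_setI0 1?disjoint_sym ?cards0 ?subn0.
Qed.

Lemma sum_subset_interval_sign (A Y : {set T}) :
  \sum_(S : {set T} | (A \subset S) && (S \subset Y)) (-1) ^+ (#|S| - #|A|)
  = (A == Y)%:R :> R.
Proof.
have [sAY | nsAY] := boolP (A \subset Y); last first.
  rewrite big_pred0 => [|S]; last first.
    by apply/andP => -[sAS sSY]; case/negP: nsAY; apply: subset_trans sSY.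
  by case: eqP nsAY => // ->; rewrite subxx.
rewrite (sum_subset_interval_card (fun s => (-1) ^+ (s - #|A|)) sAY).
under eq_bigr => j _ do rewrite addKn mulr_natl.
rewrite -exprD1n addNr expr0n.
by rewrite cards_eq0 setD_eq0 eq_sym eqEsubset sAY andbT.
Qed.

End SubsetSums.

Section InclusionExclusion.

Variables (R : nzRingType) (T Omega : finType) (X : Omega -> {set T}).

Lemma natr_leq_card (x : nat) (Y : {set T}) :
  (x <= #|Y|)%:R = \sum_(A : {set T} | (x <= #|A|)%N)
     \sum_(S : {set T} | (A \subset S) && (S \subset Y)) (-1) ^+ (#|S| - #|A|) :> R.
Proof.
under eq_bigr => A _ do rewrite sum_subset_interval_sign.
rewrite big_mkcond (bigD1 Y) //= eqxx big1 ?addr0; first by case: leqP.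
by move=> A /negbTE nAY; rewrite nAY; case: leqP.
Qed.

Lemma exchange_sum_subset_interval (A : {set T}) (g : {set T} -> R) :
  \sum_(w : Omega) \sum_(S : {set T} | (A \subset S) && (S \subset X w)) g S =
  \sum_(S : {set T} | A \subset S) #|[set w | S \subset X w]|%:R * g S.
Proof.
under eq_bigr => w _ do rewrite big_mkcondr /=.
rewrite exchange_big /=; apply: eq_bigr => S _.
rewrite natr_card_set mulr_suml; apply: eq_bigr => w _.
by case: (S \subset X w); rewrite ?mul1r ?mul0r.
Qed.

Lemma incl_excl_card_geq (a : nat -> R) (x : nat) :
  (forall S : {set T}, #|[set w | S \subset X w]|%:R = a #|S|) ->
  #|[set w | (x <= #|X w|)%N]|%:R =
  \sum_(i < #|T|.+1) 'C(#|T|, i)%:R * ((x <= i)%:R *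
     \sum_(j < (#|T| - i).+1) 'C(#|T| - i, j)%:R * ((-1) ^+ j * a (i + j)%N)).
Proof.
move=> countX.
pose F i := (x <= i)%:R *
  \sum_(j < (#|T| - i).+1) 'C(#|T| - i, j)%:R * ((-1) ^+ j * a (i + j)%N).
have -> : \sum_(i < #|T|.+1) 'C(#|T|, i)%:R * F i =
          \sum_(A : {set T} | A \subset setT) F #|A|.
  by rewrite sum_subset_card cardsT.
rewrite natr_card_set; under eq_bigr => w _ do rewrite natr_leq_card.
rewrite exchange_big /= big_mkcond /=.
apply: eq_big => [A | A _]; first by rewrite subsetT.
rewrite exchange_sum_subset_interval /F; case: leqP => _; rewrite ?mul0r // mul1r.
have cardTA : #|[set: T] :\: A| = (#|T| - #|A|)%N by rewrite setTD cardsCs setCK.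
under eq_bigr => S _ do rewrite countX commr_sign.
transitivity (\sum_(S : {set T} | (A \subset S) && (S \subset setT))
                (-1) ^+ (#|S| - #|A|) * a #|S|).
  by apply: eq_bigl => S; rewrite subsetT andbT.
rewrite (sum_subset_interval_card (fun s => (-1) ^+ (s - #|A|) * a s) (subsetT A)) cardTA.
by apply: eq_bigr => j _; rewrite addKn.
Qed.

End InclusionExclusion.

Lemma row_free_col_mx (F : fieldType) a b (v : 'rV[F]_b) (C : 'M[F]_(a, b)) :
  row_free (col_mx v C) = row_free C && ~~ (v <= C)%MS.
Proof.
rewrite /row_free -addsmxE.
have le_vC : (\rank (v + C)%MS <= (\rank C).+1)%N.
  apply: leq_trans (mxrank_adds_leqif v C).1 _.
  by rewrite -[(\rank C).+1]add1n leq_add2r rank_leq_row.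
have lt_vC : (\rank C < \rank (v + C)%MS)%N = ~~ (v <= C)%MS.
  by rewrite (ltn_leqif (mxrank_leqif_sup (addsmxSr v C))) addsmx_sub submx_refl andbT.
rewrite -lt_vC; have := rank_leq_row C; lia.
Qed.

Section RankCounting.

Variables (F : finFieldType) (R : nzRingType).
Local Notation q := #|F|.

Lemma card_submx_row_free a b (C : 'M[F]_(a, b)) : row_free C ->
  #|[set v : 'rV[F]_b | (v <= C)%MS]| = (q ^ a)%N.
Proof.
move=> freeC; have -> : [set v : 'rV_b | (v <= C)%MS] = [set w *m C | w in 'rV_a].
  by apply/setP => v; rewrite inE; apply/submxP/imsetP => [[w ->] | [w _ ->]]; exists w.
by rewrite card_imset ?card_mx ?mul1n //; apply: row_free_inj.
Qed.

Lemma card_row_free a b :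
  #|[set C : 'M[F]_(a, b) | row_free C]|%:R = \prod_(l < a) ((q ^ b)%:R - (q ^ l)%:R) :> R.
Proof.
elim: a => [|a IHa].
  rewrite big_ord0 (_ : [set _ | _] = setT) ?cardsT ?card_mx ?mul0n //.
  by apply/setP => C; rewrite !inE /row_free -leqn0 rank_leq_row.
rewrite big_ord_recr -IHa /= natr_card_set.
rewrite (reindex (fun vC : 'rV_b * 'M_(a, b) => col_mx vC.1 vC.2 : 'M_(1 + a, b))) /=; last first.
  exists (fun M : 'M_(1 + a, b) => (usubmx M, dsubmx M)) => [[v C] | M] _ /=.
    by rewrite col_mxKu col_mxKd.
  by rewrite vsubmxK.
under eq_bigr => vC _ do rewrite row_free_col_mx.
rewrite -(pair_big predT predT (fun v C => (row_free C && ~~ (v <= C)%MS)%:R)) /=.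
rewrite exchange_big /=.
rewrite natr_card_set mulr_suml; apply: eq_bigr => C _.
case: (boolP (row_free C)) => freeC /=; last by rewrite mul0r big1.
rewrite mul1r (eq_bigr (fun v => 1 - ((v <= C)%MS)%:R)) => [|v _]; last first.
  by case: (v <= C)%MS; rewrite ?subr0 ?subrr.
by rewrite sumrB sumr_const card_mx mul1n -natr_card_set card_submx_row_free.
Qed.

Lemma card_row_full a b :
  #|[set C : 'M[F]_(b, a) | row_full C]|%:R = \prod_(l < a) ((q ^ b)%:R - (q ^ l)%:R) :> R.
Proof.
rewrite -card_row_free !natr_card_set (reindex (@trmx F a b)) /=; last first.
  by exists (@trmx F b a) => C _; rewrite trmxK.
by apply: eq_bigr => C _; rewrite /row_full /row_free mxrank_tr.
Qed.

Lemma card_submx_rank n r k (W : 'M[F]_(r, k)) (P : pred nat) : row_free W ->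
  #|[set B : 'M[F]_(n, k) | (B <= W)%MS && P (\rank B)]| =
  #|[set C : 'M[F]_(n, r) | P (\rank C)]|.
Proof.
move=> freeW; rewrite -(card_imset _ (row_free_inj freeW)); congr #|pred_of_set _|.
apply/setP => B; rewrite inE; apply/andP/imsetP => [[/submxP[C ->]] | [C]].
  by rewrite mxrankMfree // => PC; exists C; rewrite ?inE.
by rewrite inE => PC ->; rewrite submxMl mxrankMfree.
Qed.

Lemma card_genmx_eq n k (U : 'M[F]_k) :
  #|[set M : 'M[F]_(n, k) | <<M>>%MS == <<U>>%MS]|%:R =
  \prod_(l < \rank U) ((q ^ n)%:R - (q ^ l)%:R) :> R.
Proof.
rewrite -card_row_full.
rewrite -(card_submx_rank n (fun m => m == \rank U) (row_base_free U)).
congr (#|pred_of_set _|%:R); apply/setP => M; rewrite !inE (eq_row_base U).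
apply/eqP/andP => [/genmxP eqMU | [sMU /eqP rkM]]; last first.
  by apply/genmxP; rewrite -(mxrank_leqif_eq sMU).2 rkM.
by split; [case/andP: eqMU | rewrite (eqmx_rank eqMU)].
Qed.

End RankCounting.

(* Subspaces of F^k are represented by their canonical generators [<<U>>]. *)
Definition is_space (F : fieldType) k (U : 'M[F]_k) := (<<U>>%MS == U).

Lemma card_genmx_partition (F : finFieldType) n k (Q : pred 'M[F]_k) :
  #|[set M : 'M[F]_(n, k) | Q <<M>>%MS]| =
  (\sum_(U : 'M_k | is_space U && Q U) #|[set M : 'M[F]_(n, k) | <<M>>%MS == U]|)%N.
Proof.
rewrite -sum1_card (partition_big (fun M => <<M>>%MS) (fun U => is_space U && Q U)) /=.
  apply: eq_bigr => U /andP[_ QU]; rewrite -sum1_card; apply: eq_bigl => M.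
  by rewrite !inE; case: eqP => [-> | _]; rewrite ?andbT ?andbF.
by move=> M; rewrite inE /is_space genmx_id eqxx.
Qed.

Section SpaceCounting.

Variable F : finFieldType.
Local Notation q := #|F|.

Lemma card_spaces_rank_mul k (V : 'M[F]_k) (d : nat) :
  #|[set U : 'M_k | [&& is_space U, (U <= V)%MS & \rank U == d]]|%:R *
    \prod_(l < d) ((q ^ d)%:R - (q ^ l)%:R)
  = \prod_(l < d) ((q ^ \rank V)%:R - (q ^ l)%:R) :> rat.
Proof.
(* Count the row-free d x k matrices with rows in V in two ways: by their
   coordinates in a basis of V, and by their row space. *)
rewrite -[RHS]card_row_free.
rewrite -(card_submx_rank d (fun m => m == d) (row_base_free V)) /=.
rewrite (_ : [set B | _] =
             [set B : 'M_(d, k) | (<<B>> <= V)%MS && (\rank <<B>> == d)]); last first.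
  by apply/setP => B; rewrite !inE genmxE mxrank_gen (eq_row_base V).
rewrite (card_genmx_partition d (fun U => (U <= V)%MS && (\rank U == d))) natr_sum.
rewrite natr_card_set big_distrl /= [RHS]big_mkcond /=; apply: eq_bigr => U _.
case: (boolP (is_space U)) => /= [/eqP spU | _]; last by rewrite mul0r.
case: (boolP ((U <= V)%MS && (\rank U == d))) => [/andP[_ /eqP rkU] | _].
  by rewrite mul1r -{1}spU card_genmx_eq rkU.
by rewrite mul0r.
Qed.

Lemma card_spaces_rank k (V : 'M[F]_k) (d : nat) :
  #|[set U : 'M_k | [&& is_space U, (U <= V)%MS & \rank U == d]]|%:R =
  gbinom q (\rank V) d.
Proof.
rewrite /gbinom lez_nat /=; case: leqP => [le_dV | lt_Vd]; last first.
  rewrite (_ : [set _ | _] = set0) ?cards0 //; apply/setP => U; rewrite !inE.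
  by apply/and3P => -[_ /mxrankS sUV /eqP rkU]; move: lt_Vd; rewrite -rkU ltnNge sUV.
have q_gt1 := card_finNzRing_gt1 F.
have den_neq0 : \prod_(l < d) ((q ^ d)%:R - (q ^ l)%:R) != 0 :> rat.
  by apply/prodf_neq0 => l _; rewrite subr_eq0 eqr_nat eqn_exp2l // gtn_eqF.
by rewrite prodf_div -card_spaces_rank_mul mulfK.
Qed.

End SpaceCounting.

Section ComplementSpaces.

Variables (F : fieldType) (k : nat) (E V : 'M[F]_k).
Hypotheses (capEV : (E :&: V = 0)%MS) (addEV : (1%:M <= E + V)%MS).

Lemma adds_cap_compl (U : 'M_k) : (E <= U)%MS -> (E + (U :&: V) :=: U)%MS.
Proof.
move=> sEU; rewrite capmxC; apply: eqmx_trans (matrix_modl V sEU) _.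
by apply/capmx_idPr; apply: submx_trans addEV; apply: submx1.
Qed.

Lemma cap_adds_compl (W : 'M_k) : (W <= V)%MS -> ((E + W) :&: V :=: W)%MS.
Proof.
move=> sWV; rewrite addsmxC; apply: eqmx_trans (eqmx_sym (matrix_modl E sWV)) _.
by rewrite capEV; apply: addsmx0.
Qed.

Lemma mxrank_adds_compl (W : 'M_k) :
  (W <= V)%MS -> \rank (E + W)%MS = (\rank E + \rank W)%N.
Proof.
move=> sWV; apply: mxrank_disjoint_sum; apply/eqP; rewrite -submx0 -capEV.
exact: capmxS.
Qed.

End ComplementSpaces.

Lemma card_spaces_supmx_rank (F : finFieldType) k (E V : 'M[F]_k) (r : nat) :
  (E :&: V = 0)%MS -> (1%:M <= E + V)%MS ->
  #|[set U : 'M_k | [&& is_space U, (E <= U)%MS & \rank U == r]]| =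
  #|[set W : 'M_k | [&& is_space W, (W <= V)%MS & (\rank E + \rank W == r)%N]]|.
Proof.
move=> capEV addEV.
set As := [set U | _]; set Bs := [set W | _].
pose f (U : 'M[F]_k) := <<U :&: V>>%MS; pose g (W : 'M[F]_k) := <<(E + W)%MS>>%MS.
have fK : {in As, cancel f g}.
  move=> U; rewrite inE => /and3P[/eqP spU sEU _]; rewrite /f /g -[RHS]spU.
  apply/genmxP/eqmxP; apply: eqmx_trans (adds_eqmx (eqmx_refl E) (genmxE _)) _.
  exact: adds_cap_compl.
have gK : {in Bs, cancel g f}.
  move=> W; rewrite inE => /and3P[/eqP spW sWV _]; rewrite /f /g -[RHS]spW.
  apply/genmxP/eqmxP; apply: eqmx_trans (cap_eqmx (genmxE _) (eqmx_refl V)) _.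
  exact: cap_adds_compl.
have fA : {in As, forall U, f U \in Bs}.
  move=> U; rewrite !inE => /and3P[_ sEU /eqP rkU].
  rewrite /is_space /f genmx_id eqxx !genmxE capmxSr -rkU.
  by rewrite -(adds_cap_compl addEV sEU).1 (mxrank_adds_compl capEV) ?capmxSr ?eqxx.
have gB : {in Bs, forall W, g W \in As}.
  move=> W; rewrite !inE => /and3P[_ sWV /eqP rkW].
  rewrite /is_space /g genmx_id eqxx !genmxE addsmxSl.
  by rewrite (mxrank_adds_compl capEV) ?rkW ?eqxx.
rewrite -(card_in_imset (can_in_inj fK)); congr #|pred_of_set _|.
apply/setP => W; apply/imsetP/idP => [[U AU ->] | BW]; first exact: fA.
by exists (g W); rewrite ?gB ?gK.
Qed.

Lemma card_spaces_supmx_gbinom (F : finFieldType) k (E V : 'M[F]_k) (r : nat) :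
  (E :&: V = 0)%MS -> (1%:M <= E + V)%MS ->
  #|[set U : 'M_k | [&& is_space U, (E <= U)%MS & \rank U == r]]|%:R =
  gbinom #|F| (\rank V) (r%:Z - (\rank E)%:Z).
Proof.
move=> capEV addEV; rewrite (card_spaces_supmx_rank r capEV addEV).
have [le_Er | lt_rE] := leqP (\rank E) r.
  rewrite subzn // -card_spaces_rank; congr (#|pred_of_set _|%:R); apply/setP => W.
  by rewrite !inE -(eqn_add2l (\rank E) (\rank W)) subnKC.
rewrite /gbinom ifF; last by rewrite subr_ge0 lez_nat leqNgt lt_rE.
rewrite (_ : [set _ | _] = set0) ?cards0 //; apply/setP => W; rewrite !inE.
by apply/and3P => -[_ _ /eqP rkEW]; move: lt_rE; rewrite -rkEW ltnNge leq_addr.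
Qed.

Definition coord_space (F : fieldType) k (S : {set 'I_k}) : 'M[F]_k :=
  (\sum_(i in S) <<delta_mx (0 : 'I_1) i>>)%MS.

Section CoordSpace.

Variables (F : fieldType) (k : nat).

Lemma coord_space_sub (S : {set 'I_k}) m (M : 'M[F]_(m, k)) :
  (coord_space F S <= M)%MS = (S \subset recoverable M).
Proof.
apply/sumsmx_subP/subsetP => sSM i iS; first by rewrite inE -genmxE sSM.
by rewrite genmxE; have := sSM i iS; rewrite inE.
Qed.

Lemma mxrank_coord_space (S : {set 'I_k}) : \rank (coord_space F S) = #|S|.
Proof.
have /mxdirectP -> := @mxdirect_delta F _ (mem S) k id (in2W (@inj_id _)).
by rewrite /= -sum1_card; apply: eq_bigr => i _; rewrite mxrank_gen mxrank_delta.
Qed.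

Lemma coord_space_compl_full (S : {set 'I_k}) :
  (1%:M <= coord_space F S + coord_space F (~: S))%MS.
Proof.
apply/row_subP => i; rewrite row1.
have [iS | niS] := boolP (i \in S).
  by apply: submx_trans (addsmxSl _ _); apply: (sumsmx_sup i); rewrite ?genmxE.
by apply: submx_trans (addsmxSr _ _); apply: (sumsmx_sup i); rewrite ?inE ?genmxE.
Qed.

Lemma coord_space_compl_cap (S : {set 'I_k}) :
  (coord_space F S :&: coord_space F (~: S))%MS = 0.
Proof.
apply/eqP; rewrite -mxrank_eq0 -(eqn_add2l k).
have := mxrank_sum_cap (coord_space F S) (coord_space F (~: S)).
rewrite !mxrank_coord_space cardsC card_ord.
move: (coord_space_compl_full S); rewrite sub1mx => /eqnP ->.
by move=> ->; rewrite addn0.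
Qed.

End CoordSpace.

Lemma card_recoverable_supset (F : finFieldType) n k (S : {set 'I_k}) :
  #|[set M : 'M[F]_(n, k) | S \subset recoverable M]|%:R =
  \sum_(r < k.+1) gbinom #|F| (k%:Z - #|S|%:Z) (r%:Z - #|S|%:Z) *
                  \prod_(l < r) ((#|F| ^ n)%:R - (#|F| ^ l)%:R).
Proof.
set E := coord_space F S; set V := coord_space F (~: S).
have rkV : (\rank V)%:Z = k%:Z - #|S|%:Z.
  by rewrite mxrank_coord_space; have := cardsC S; rewrite card_ord; lia.
rewrite (_ : [set M | _] = [set M : 'M_(n, k) | (E <= <<M>>)%MS]); last first.
  by apply/setP => M; rewrite !inE genmxE coord_space_sub.
rewrite card_genmx_partition natr_sum.
under eq_bigr => U /andP[/eqP spU _] do rewrite -{1}spU card_genmx_eq.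
rewrite (@sum_partition_nat _ _ (fun U : 'M_k => is_space U && (E <= U)%MS)
  (@mxrank F k k) k.+1 (fun r => \prod_(l < r) ((#|F| ^ n)%:R - (#|F| ^ l)%:R))); last first.
  by move=> U _; rewrite ltnS rank_leq_col.
apply: eq_bigr => r _; congr (_ * _); rewrite -rkV -(mxrank_coord_space F S).
rewrite -card_spaces_supmx_gbinom ?coord_space_compl_cap ?coord_space_compl_full //.
by congr (#|pred_of_set _|%:R); apply/setP => U; rewrite !inE andbA.
Qed.

Section ExchangeSums.

Variables (R : comNzRingType) (n k x : nat) (G : int -> int -> R) (P : nat -> R).
Hypotheses (G_neg : forall m d, d < 0 -> G m d = 0) (P_gt : forall r, (n < r)%N -> P r = 0).

Lemma exchange_incl_excl_sum : (x <= k)%N ->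
  \sum_(i < k.+1) 'C(k, i)%:R * ((x <= i)%:R *
     \sum_(j < (k - i).+1) 'C(k - i, j)%:R * ((-1) ^+ j *
        \sum_(r < k.+1) (G (k%:Z - (i + j)%N%:Z) (r%:Z - (i + j)%N%:Z) * P r)))
  = \sum_(x <= r < (minn n k).+1)
      ((\sum_(x <= i < r.+1) 'C(k, i)%:R *
          \sum_(j < (k - i).+1)
            ((-1) ^+ j * 'C(k - i, j)%:R * G (k%:Z - i%:Z - j%:Z) (r%:Z - i%:Z - j%:Z)))
       * P r).
Proof.
move=> le_xk.
pose term (i j r : nat) := (x <= i)%:R * 'C(k, i)%:R * 'C(k - i, j)%:R
   * (-1) ^+ j * G (k%:Z - i%:Z - j%:Z) (r%:Z - i%:Z - j%:Z) * P r.
transitivity (\sum_(i < k.+1) \sum_(j < (k - i).+1) \sum_(r < k.+1) term i j r).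
  apply: eq_bigr => i _; rewrite !mulr_sumr; apply: eq_bigr => j _.
  rewrite !mulr_sumr; apply: eq_bigr => r _.
  by rewrite /term PoszD opprD !addrA; ring.
have le_mk : ((minn n k).+1 <= k.+1)%N by rewrite ltnS geq_minr.
rewrite [RHS](sum_nat_indicator _ _ le_mk).
under [RHS]eq_bigr => r _ do rewrite (sum_nat_indicator _ _ (ltn_ord r)) mulr_suml mulr_sumr.
rewrite [RHS]exchange_big /=; apply: eq_bigr => i _.
under [RHS]eq_bigr => r _ do rewrite !mulr_sumr !mulr_suml !mulr_sumr.
rewrite [RHS]exchange_big /=; apply: eq_bigr => j _; apply: eq_bigr => r _.
have [lt_r_ij | le_ij_r] := ltnP r (i + j).
  have d_lt0 : r%:Z - i%:Z - j%:Z < 0 by lia.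
  by rewrite /term (G_neg _ d_lt0) !(mulr0, mul0r).
have [lt_nr | le_rn] := ltnP n r; first by rewrite /term (P_gt lt_nr) !mulr0.
have lt_r_mnk : (r < (minn n k).+1)%N by have := ltn_ord r; lia.
have lt_i_r : (i < r.+1)%N by lia.
rewrite /term lt_r_mnk lt_i_r !andbT.
have [le_xi | lt_ix] := leqP x i; last by rewrite !(mulr0, mul0r).
have le_xr : (x <= r)%N by lia.
by rewrite le_xr /=; ring.
Qed.

End ExchangeSums.

Theorem proposition1 (F : finFieldType) (n k x : nat)
  (hn : (1 <= n)%N) (hk : (1 <= k)%N) (hx : (x <= k)%N) :
  let q := #|F| in
  ((#|[set M : 'M[F]_(n, k) | (x <= #|recoverable M|)%N]|)%:R / (q ^ (n * k))%:R : rat)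
  = (1 / (q ^ (n * k))%:R) *
    \sum_(x <= r < (minn n k).+1)
      ((\sum_(x <= i < r.+1)
          ('C(k, i))%:R *
          \sum_(j < (k - i).+1)
            ((-1) ^+ j * ('C(k - i, j))%:R *
             gbinom q (k%:Z - i%:Z - j%:Z) (r%:Z - i%:Z - j%:Z)))
       * \prod_(l < r) ((q ^ n)%:R - (q ^ l)%:R))%R.
Proof.
move=> q; rewrite div1r [RHS]mulrC; congr (_ / _).
have G_neg (m d : int) : d < 0 -> gbinom q m d = 0.
  by move=> d_lt0; rewrite /gbinom ifF // leNgt d_lt0.
have P_gt r : (n < r)%N -> \prod_(l < r) ((q ^ n)%:R - (q ^ l)%:R) = 0 :> rat.
  by move=> lt_nr; rewrite (bigD1 (Ordinal lt_nr)) //= subrr mul0r.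
pose a (s : nat) := \sum_(r < k.+1)
  gbinom q (k%:Z - s%:Z) (r%:Z - s%:Z) * \prod_(l < r) ((q ^ n)%:R - (q ^ l)%:R).
have countX (S : {set 'I_k}) :
  #|[set M : 'M[F]_(n, k) | S \subset recoverable M]|%:R = a #|S|.
  exact: card_recoverable_supset.
rewrite (incl_excl_card_geq x countX) card_ord.
exact: exchange_incl_excl_sum.
Qed.
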